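(* Let $\mathcal{A}$ be a finite list in a finitely generated abelian group $\Gamma$, and let $G_1,G_2$ be torsion-wise finite abelian groups. Then $$T^{G_1\times G_2}_{\mathcal{A}}(x,y)=\sum_{\mathcal{B}\subset\mathcal{A}}T^{G_1}_{\mathcal{B}}(0,y)\cdot T^{G_2}_{\mathcal{A}/\mathcal{B}}(x,0),$$ where $\mathcal{B}$ is regarded as a list in $\Gamma$ and $\mathcal{A}/\mathcal{B}$ as a list in $\Gamma/\langle\mathcal{B}\rangle$.
   Context: $G$ is torsion-wise finite if $G[d]=\{x\in G\mid dx=0\}$ is finite for all $d>0$. Sublists are distinguished by index. For a list $\mathcal{L}$ in a finitely generated abelian group $\Lambda$ and a sublist $\mathcal{S}$: $r_{\mathcal{S}}$ is the rank of $\langle\mathcal{S}\rangle$, $m(\mathcal{S};G)=\#\mathrm{Hom}((\Lambda/\langle\mathcal{S}\rangle)_{\mathrm{tor}},G)$, and $T^G_{\mathcal{L}}(x,y)=\sum_{\mathcal{S}\subset\mathcal{L}}m(\mathcal{S};G)(x-1)^{r_{\mathcal{L}}-r_{\mathcal{S}}}(y-1)^{\#\mathcal{S}-r_{\mathcal{S}}}$. The contraction $\mathcal{A}/\mathcal{B}$ is the list of cosets $\{\overline\alpha\mid\alpha\in\mathcal{A}\smallsetminus\mathcal{B}\}$ in $\Gamma/\langle\mathcal{B}\rangle$. *)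

From HB Require Import structures.
From mathcomp Require Import all_boot all_order all_algebra.
From Stdlib Require Import ClassicalEpsilon.
Set Implicit Arguments. Unset Strict Implicit. Unset Printing Implicit Defensive.
Import Order.TTheory GRing.Theory Num.Theory.
Local Open Scope ring_scope.

Definition inspan (V : zmodType) (S : seq V) (v : V) : Prop :=
  exists c : 'I_(size S) -> int, v = \sum_(i < size S) S`_i *~ c i.

Definition fin_gen (V : zmodType) : Prop :=
  exists gens : seq V, forall v : V, inspan gens v.

Definition torsionwise_finite (G : zmodType) : Prop :=
  forall d : nat, (0 < d)%N -> exists s : seq G, forall x : G, x *+ d = 0 -> x \in s.

(* Quotients are handled through lifts: a list "in Gamma/<N>" is a list of
   representatives in Gamma; Lambda = Gamma/<N>. *)

Definition indep_mod (V : zmodType) (N : seq V) (xs : seq V) : Prop :=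
  forall c : 'I_(size xs) -> int,
    inspan N (\sum_(i < size xs) xs`_i *~ c i) -> forall i, c i = 0.

(* r is the rank of the subgroup <S-bar> of Gamma/<N>, i.e. the maximal number
   of Z-independent elements of <S-bar>; the preimage of <S-bar> in Gamma is
   <N ++ S>. *)
Definition is_rank_mod (V : zmodType) (N S : seq V) (r : nat) : Prop :=
  (exists xs : seq V, size xs = r /\ (forall x, x \in xs -> inspan (N ++ S) x)
                      /\ indep_mod N xs) /\
  (forall xs : seq V, (forall x, x \in xs -> inspan (N ++ S) x) ->
                      indep_mod N xs -> (size xs <= r)%N).

Definition rank_mod (V : zmodType) (N S : seq V) : nat :=
  epsilon (inhabits 0%N) (is_rank_mod N S).

(* The subgroup K = <N ++ S> of Gamma is the preimage of <S-bar> in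
   Lambda = Gamma/<N>, and Lambda/<S-bar> = Gamma/K.  Its torsion subgroup is
   Ksat/K where Ksat = {x | exists k > 0, k x in K}. *)
Definition in_sat (V : zmodType) (K : seq V) (x : V) : Prop :=
  exists k : nat, (0 < k)%N /\ inspan K (x *+ k).

(* phi (a function on lifts) defines a homomorphism Ksat/K -> G. *)
Definition is_tor_hom (V G : zmodType) (K : seq V) (phi : V -> G) : Prop :=
  (forall x y, in_sat K x -> in_sat K y -> phi (x + y) = phi x + phi y) /\
  (forall x, inspan K x -> phi x = 0).

(* #Hom((Gamma/K)_tor, G) = n : two such functions define the same
   homomorphism iff they agree on Ksat. *)
Definition is_hom_count (V G : zmodType) (K : seq V) (n : nat) : Prop :=
  exists hs : seq (V -> G),
    size hs = n /\
    (forall i, (i < n)%N -> is_tor_hom K (nth (fun _ => 0) hs i)) /\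
    (forall i j, (i < n)%N -> (j < n)%N ->
       (forall x, in_sat K x -> nth (fun _ => 0) hs i x = nth (fun _ => 0) hs j x) ->
       i = j) /\
    (forall phi, is_tor_hom K phi ->
       exists2 i, (i < n)%N &
         forall x, in_sat K x -> phi x = nth (fun _ => 0) hs i x).

Definition mult_mod (V : zmodType) (G : zmodType) (N S : seq V) : nat :=
  epsilon (inhabits 0%N) (is_hom_count G (N ++ S)).

Definition subl (V : Type) (L : seq V) (x0 : V) (I : {set 'I_(size L)}) : seq V :=
  [seq nth x0 L (val i) | i <- enum I].
Arguments subl {V} L x0 I.

Definition arith_tutte (R : comNzRingType) (V G : zmodType) (N L : seq V) (x y : R) : R :=
  \sum_(I : {set 'I_(size L)})
     (mult_mod G N (subl L 0 I))%:R
     * (x - 1) ^+ (rank_mod N L - rank_mod N (subl L 0 I))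
     * (y - 1) ^+ (#|I| - rank_mod N (subl L 0 I)).
Arguments arith_tutte R {V} G N L x y.

From HB Require Import structures.
From mathcomp Require Import all_boot all_order all_algebra.
From mathcomp Require Import boolp ring.
From Stdlib Require Import ClassicalEpsilon.
Set Implicit Arguments. Unset Strict Implicit. Unset Printing Implicit Defensive.
Import Order.TTheory GRing.Theory Num.Theory.
Local Open Scope ring_scope.

(* Write m(S; G) for the multiplicity and r(S) for the rank of a sublist S.
   Since Hom(T, G1 x G2) = Hom(T, G1) x Hom(T, G2), the left-hand side is
   sum_S f(S) g(S) with f(S) = m(S; G1) (y-1)^(|S|-r(S)) (-1)^r(S) and
   g(S) = m(S; G2) (x-1)^(r(A)-r(S)) (-1)^r(S).  On the right,
   T^G1_B(0, y) = (-1)^r(B) sum_(C <= B) f(C), and since rank is additive along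
   Gamma -> Gamma/<B> while m for A/B at D is m for A at B u D,
   T^G2_(A/B)(x, 0) = (-1)^r(B) sum_(S >= B) g(S) (-1)^|S \ B|.  Mobius inversion
   on the Boolean lattice collapses sum_(C <= B <= S) f(C) g(S) (-1)^|S \ B| to
   sum_S f(S) g(S).  The multiplicities are genuine finite counts, multiplicative
   in G, because the torsion of Gamma/<S> has finite exponent and G[d] is finite. *)

Section Span.
Variable V : zmodType.
Implicit Types (N S K W : seq V) (u v w x : V).

Lemma inspan0 S : inspan S 0.
Proof. by exists (fun=> 0); rewrite big1 // => i _; rewrite mulr0z. Qed.

Lemma inspanD S u v : inspan S u -> inspan S v -> inspan S (u + v).
Proof.
move=> [c ->] [d ->]; exists (fun i => c i + d i).
by rewrite -big_split; apply: eq_bigr => i _; rewrite mulrzDr.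
Qed.

Lemma inspanMz S u z : inspan S u -> inspan S (u *~ z).
Proof.
move=> [c ->]; exists (fun i => c i * z).
by rewrite mulrz_suml; apply: eq_bigr => i _; rewrite mulrzA.
Qed.

Lemma inspanN S u : inspan S u -> inspan S (- u).
Proof. by move=> /(inspanMz (-1)); rewrite mulrN1z. Qed.

Lemma inspanB S u v : inspan S u -> inspan S v -> inspan S (u - v).
Proof. by move=> hu /inspanN; apply: inspanD. Qed.

Lemma inspanMn S u n : inspan S u -> inspan S (u *+ n).
Proof. by move=> /(inspanMz n%:R); rewrite mulrz_nat. Qed.

Lemma inspan_sum S (I : finType) (F : I -> V) :
  (forall i, inspan S (F i)) -> inspan S (\sum_i F i).
Proof. by move=> SF; apply: big_ind => //; [apply: inspan0 | apply: inspanD]. Qed.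

Lemma inspan_mem S x : x \in S -> inspan S x.
Proof.
rewrite -index_mem => ltxS; exists (fun i => (val i == index x S)%:Z).
rewrite (bigD1 (Ordinal ltxS)) //= eqxx mulr1z nth_index -?index_mem //.
rewrite big1 ?addr0 // => i neq; rewrite -val_eqE /= in neq.
by rewrite (negbTE neq) mulr0z.
Qed.

Lemma inspan_ind S (P : V -> Prop) :
  P 0 -> (forall u v, P u -> P v -> P (u + v)) -> (forall u z, P u -> P (u *~ z)) ->
  (forall x, x \in S -> P x) -> forall v, inspan S v -> P v.
Proof.
move=> P0 PD PZ PS v [c ->]; apply: (big_ind P) => // i _.
by apply/PZ/PS/mem_nth.
Qed.

Lemma inspan_trans S W :
  (forall x, x \in S -> inspan W x) -> forall v, inspan S v -> inspan W v.
Proof. by apply: inspan_ind; [apply: inspan0 | apply: inspanD | move=> u z; apply: inspanMz]. Qed.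

Lemma inspan_subset S W : {subset S <= W} -> forall v, inspan S v -> inspan W v.
Proof. by move=> sSW; apply: inspan_trans => x /sSW /inspan_mem. Qed.

Lemma inspan_eq_mem S W : S =i W -> forall v, inspan S v <-> inspan W v.
Proof. by move=> eSW v; split; apply: inspan_subset => x; rewrite eSW. Qed.

Lemma inspan_ext S W : (forall v, inspan S v <-> inspan W v) -> inspan S = inspan W.
Proof. by move=> eSW; apply: funext => v; apply: propext. Qed.

Lemma inspan_catP N S v :
  inspan (N ++ S) v <-> exists n s, [/\ inspan N n, inspan S s & v = n + s].
Proof.
split; last first.
  move=> [n [s [hn hs ->]]]; apply: inspanD.
    by apply: inspan_subset hn => z zN; rewrite mem_cat zN.
  by apply: inspan_subset hs => z zS; rewrite mem_cat zS orbT.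
move: v; apply: inspan_ind.
- by exists 0, 0; rewrite addr0; split=> //; apply: inspan0.
- move=> _ _ [n1 [s1 [hn1 hs1 ->]]] [n2 [s2 [hn2 hs2 ->]]].
  by exists (n1 + n2), (s1 + s2); rewrite addrACA; split=> //; apply: inspanD.
- move=> _ z [n [s [hn hs ->]]]; exists (n *~ z), (s *~ z).
  by rewrite mulrzDl; split=> //; apply: inspanMz.
- move=> x; rewrite mem_cat => /orP[xN | xS].
    by exists x, 0; rewrite addr0; split; [apply: inspan_mem | apply: inspan0 |].
  by exists 0, x; rewrite add0r; split; [apply: inspan0 | apply: inspan_mem |].
Qed.

Lemma inspan_nil v : inspan [::] v -> v = 0.
Proof. by move=> [c ->]; rewrite big_ord0. Qed.

Lemma inspan_seq1 w v : inspan [:: w] v -> exists a, v = w *~ a.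
Proof. by move=> [c ->]; exists (c ord0); rewrite big_ord1. Qed.

Lemma in_sat_span K x : inspan K x -> in_sat K x.
Proof. by exists 1%N; rewrite mulr1n. Qed.

Lemma in_sat0 K : in_sat K 0.
Proof. exact/in_sat_span/inspan0. Qed.

Lemma in_satD K u v : in_sat K u -> in_sat K v -> in_sat K (u + v).
Proof.
move=> [k [k0 hk]] [l [l0 hl]]; exists (k * l)%N; split; first by rewrite muln_gt0 k0.
by rewrite mulrnDl mulrnA [in X in _ + X]mulnC mulrnA; apply: inspanD; apply: inspanMn.
Qed.

Lemma in_satMz K u z : in_sat K u -> in_sat K (u *~ z).
Proof.
move=> [k [k0 hk]]; exists k.
by rewrite -mulrz_nat mulrzAC mulrz_nat; split=> //; apply: inspanMz.
Qed.

Lemma in_satB K u v : in_sat K u -> in_sat K v -> in_sat K (u - v).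
Proof. by move=> hu hv; apply: in_satD => //; rewrite -mulrN1z; apply: in_satMz. Qed.

Lemma in_satMn K u n : in_sat K u -> in_sat K (u *+ n).
Proof. by move=> /(in_satMz n%:R); rewrite mulrz_nat. Qed.

Lemma in_sat_of_mulz K v a : a != 0 -> inspan K (v *~ a) -> in_sat K v.
Proof.
move=> a0 hva; exists (absz (a * a)); split; first by rewrite absz_gt0 mulf_neq0.
rewrite pmulrn gez0_abs; last by rewrite -expr2 sqr_ge0.
by rewrite mulrzA; apply: inspanMz.
Qed.

Lemma in_sat_of_mulrn K v M : (0 < M)%N -> in_sat K (v *+ M) -> in_sat K v.
Proof.
move=> M0 [k [k0 hk]].
by exists (M * k)%N; rewrite muln_gt0 M0 mulrnA.
Qed.

Lemma in_sat_inspan W K :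
  (forall w, w \in W -> in_sat K w) -> forall v, inspan W v -> in_sat K v.
Proof.
by apply: inspan_ind; [apply: in_sat0 | apply: in_satD | move=> u z; apply: in_satMz].
Qed.

Lemma in_sat_trans W K v :
  (forall w, w \in W -> in_sat K w) -> in_sat W v -> in_sat K v.
Proof. by move=> WK [k [k0 /(in_sat_inspan WK)]]; apply: in_sat_of_mulrn. Qed.

Lemma in_sat_subset W K v :
  (forall u, inspan W u -> inspan K u) -> in_sat W v -> in_sat K v.
Proof. by move=> WK [k [k0 hk]]; exists k; split=> //; apply: WK. Qed.

Lemma in_sat_uniform_exponent W K : (forall w, w \in W -> in_sat K w) ->
  exists2 M, (0 < M)%N & forall v, inspan W v -> inspan K (v *+ M).
Proof.
elim: W => [|w W IH] WK.
  by exists 1%N => // v /inspan_nil ->; rewrite mul0rn; apply: inspan0.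
have [M M0 HM] := IH (fun v vW => WK v (mem_behead (s := w :: W) vW)).
have [k [k0 hk]] := WK w (mem_head _ _).
exists (k * M)%N; first by rewrite muln_gt0 k0.
apply: inspan_ind => [|u v hu hv|u z hu|v].
- by rewrite mul0rn; apply: inspan0.
- by rewrite mulrnDl; apply: inspanD.
- by rewrite -mulrz_nat mulrzAC mulrz_nat; apply: inspanMz.
rewrite inE => /orP[/eqP -> | vW]; first by rewrite mulrnA; apply: inspanMn.
by rewrite mulnC mulrnA; apply/inspanMn/HM/inspan_mem.
Qed.

End Span.

Section Rank.
Variable V : zmodType.
Implicit Types (N S xs ys : seq V) (v w x : V).

(* Unlike [indep_mod], independence of a family indexed by a set survives
   deleting members, as the exchange argument requires. *)
Definition indep_fam N (I : finType) (P : {set I}) (z : I -> V) :=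
  forall c : I -> int, inspan N (\sum_(i in P) z i *~ c i) -> forall i, i \in P -> c i = 0.

Lemma sum_fam_delta (I : finType) (P : {set I}) (z : I -> V) i a : i \in P ->
  \sum_(j in P) z j *~ ((j == i)%:Z * a) = z i *~ a.
Proof.
move=> iP; rewrite (bigD1 i) //= eqxx mul1r big1 ?addr0 // => j /andP[_ /negbTE ->].
by rewrite mul0r mulr0z.
Qed.

Lemma indep_fam_not_sat N (I : finType) (P : {set I}) (z : I -> V) i :
  indep_fam N P z -> i \in P -> ~ in_sat N (z i).
Proof.
move=> indz iP [k [k0 hk]].
have hk' : inspan N (\sum_(j in P) z j *~ ((j == i)%:Z * k%:Z)).
  by rewrite sum_fam_delta // mulrz_nat.
by have /eqP := indz _ hk' i iP; rewrite eqxx mul1r eqz_nat eqn0Ngt k0.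
Qed.

(* Exchange step: a dependence modulo [w :: N] involves some member i0 with a
   nonzero coefficient, and i0 can be traded for w. *)
Lemma indep_fam_exchange N w (I : finType) (P : {set I}) (z : I -> V) :
  indep_fam N P z -> ~ indep_fam (w :: N) P z ->
  exists2 i0, i0 \in P & indep_fam (w :: N) (P :\ i0) z.
Proof.
move=> indz /existsNP [c /existsNP [hc /existsNP [i0 /not_implyP [i0P /eqP ci0]]]].
exists i0 => //.
move/(inspan_catP [:: w] N): hc => [_ [n [/inspan_seq1 [a ->] hn hsum]]].
have a0 : a != 0.
  apply: contra ci0 => /eqP a0; apply/eqP/(indz c _ i0 i0P).
  by rewrite hsum a0 mulr0z add0r.
move=> d /(inspan_catP [:: w] N) [_ [n' [/inspan_seq1 [b ->] hn' hsum']]].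
pose e i := (if i == i0 then 0 else d i * a) - c i * b.
have hE : inspan N (\sum_(i in P) z i *~ e i).
  suff -> : \sum_(i in P) z i *~ e i = n' *~ a - n *~ b.
    by apply: inspanB; apply: inspanMz.
  rewrite /e; under eq_bigr => i _ do rewrite mulrzBr.
  rewrite sumrB (bigD1 i0) //= eqxx mulr0z add0r.
  under eq_bigl => i do rewrite andbC -in_setD1.
  under eq_bigr => i /setD1P [/negbTE -> _] do rewrite mulrzA.
  under [X in _ - X]eq_bigr => i _ do rewrite mulrzA.
  rewrite -!mulrz_suml hsum' hsum !mulrzDl -!mulrzA (mulrC b a).
  by rewrite opprD addrACA subrr add0r.
have b0 : b = 0.
  have /eqP := indz e hE i0 i0P; rewrite /e eqxx add0r oppr_eq0 mulf_eq0.
  by rewrite (negbTE ci0) => /eqP.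
move=> i /setD1P [ii0 iP]; have /eqP := indz e hE i iP.
by rewrite /e (negbTE ii0) b0 mulr0 subr0 mulf_eq0 (negbTE a0) orbF => /eqP.
Qed.

Lemma indep_fam_card_le ws N (I : finType) (P : {set I}) (z : I -> V) :
  indep_fam N P z -> (forall i, i \in P -> in_sat (N ++ ws) (z i)) -> (#|P| <= size ws)%N.
Proof.
elim: ws N P => [|w ws IH] N P indz zsat.
  rewrite leqn0 cards_eq0; apply/eqP/setP => i; rewrite in_set0.
  apply/negP => iP; apply: (indep_fam_not_sat indz iP).
  by move: (zsat i iP); rewrite cats0.
have zsat' i : i \in P -> in_sat ((w :: N) ++ ws) (z i).
  move=> /zsat; apply: in_sat_subset; apply: inspan_subset => v.
  by rewrite !(mem_cat, inE); case: (v == w); case: (v \in N).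
have [indw | /(indep_fam_exchange indz) [i0 i0P indw]] := EM (indep_fam (w :: N) P z).
  by apply: leq_trans (IH _ _ indw zsat') (leqnSn _).
rewrite (cardsD1 i0) i0P add1n ltnS.
by apply: IH indw _ => i /setD1P [_ /zsat'].
Qed.

Lemma indep_mod_size_le N ws xs :
  indep_mod N xs -> (forall x, x \in xs -> in_sat (N ++ ws) x) -> (size xs <= size ws)%N.
Proof.
move=> indxs xsat.
have := @indep_fam_card_le ws N _ [set: 'I_(size xs)] (fun i => xs`_i).
rewrite cardsT card_ord; apply=> [c hc i _ | i _].
  by apply: indxs; move: hc; under eq_bigl => j do rewrite in_setT.
exact/xsat/mem_nth.
Qed.

Lemma indep_mod_natP N xs :
  indep_mod N xs <-> (forall c : nat -> int, inspan N (\sum_(i < size xs) xs`_i *~ c i) ->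
                       forall i, (i < size xs)%N -> c i = 0).
Proof.
split=> [indxs c hc i ilt | indxs c hc i].
  exact: (indxs (fun j => c (val j)) hc (Ordinal ilt)).
pose c' k := if insub k is Some j then c j else 0.
have c'E (j : 'I_(size xs)) : c' j = c j by rewrite /c' valK.
rewrite -c'E; apply: indxs (ltn_ord i).
by under eq_bigr => j _ do rewrite c'E.
Qed.

Lemma rank_modP N S : is_rank_mod N S (rank_mod N S).
Proof.
rewrite /rank_mod; apply: epsilon_spec.
pose Q r := `[< exists xs, [/\ size xs = r, forall x, x \in xs -> inspan (N ++ S) x
                                         & indep_mod N xs] >].
have Q0 : Q 0%N by apply/asboolP; exists [::]; split=> // c _ [].
have Qle r : Q r -> (r <= size S)%N.
  move=> /asboolP [xs [<- xsS indxs]].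
  by apply: indep_mod_size_le indxs _ => x /xsS /in_sat_span.
have [r /asboolP [xs [rE xsS indxs]] rmax] := ex_maxnP (ex_intro Q 0%N Q0) Qle.
exists r; split; first by exists xs.
by move=> ys ysS indys; apply: rmax; apply/asboolP; exists ys.
Qed.

Lemma rank_mod_basis_sat N S xs :
  size xs = rank_mod N S -> (forall x, x \in xs -> inspan (N ++ S) x) -> indep_mod N xs ->
  forall v, inspan (N ++ S) v -> in_sat (N ++ xs) v.
Proof.
move=> sxs xsS indxs v vS.
have vxsS x : x \in v :: xs -> inspan (N ++ S) x by rewrite inE => /orP[/eqP -> | /xsS].
have dep : ~ (forall c : nat -> int,
    inspan N (\sum_(i < size (v :: xs)) (v :: xs)`_i *~ c i) ->
    forall i, (i < size (v :: xs))%N -> c i = 0).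
  by move=> /indep_mod_natP /((rank_modP N S).2 _ vxsS); rewrite /= -sxs ltnn.
move: dep => /existsNP [c /existsNP [hc /existsNP [i /not_implyP [ilt /eqP ci]]]].
move: hc; rewrite big_ord_recl /= => hc.
have [c0 | c0] := eqVneq (c 0%N) 0.
  have ci0 : forall j, (j < size xs)%N -> c j.+1 = 0.
    move/indep_mod_natP: indxs; apply.
    by move: hc; rewrite c0 mulr0z add0r.
  by case: i ilt ci => [|j] /=; rewrite ?c0 ?eqxx //; rewrite ltnS => /ci0 ->; rewrite eqxx.
apply: (in_sat_of_mulz c0); apply/inspan_catP.
set s := \sum_(_ < _) _ in hc.
exists (v *~ c 0%N + s), (- s); split=> //; last by rewrite addrK.
apply/inspanN/inspan_sum => j; apply/inspanMz/inspan_mem/mem_nth/ltn_ord.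
Qed.

Lemma rank_mod_eq_span N S N' S' :
  (forall v, inspan N v <-> inspan N' v) ->
  (forall v, inspan (N ++ S) v <-> inspan (N' ++ S') v) ->
  rank_mod N S = rank_mod N' S'.
Proof.
by move=> /inspan_ext eN /inspan_ext eS; rewrite /rank_mod /is_rank_mod /indep_mod eN eS.
Qed.

Lemma rank_mod_mono N S S' :
  (forall v, inspan (N ++ S) v -> inspan (N ++ S') v) -> (rank_mod N S <= rank_mod N S')%N.
Proof.
move=> sSS'; have [[xs [<- [xsS indxs]]] _] := rank_modP N S.
by apply: (rank_modP N S').2 indxs => x /xsS /sSS'.
Qed.

Lemma rank_mod_le_size N S : (rank_mod N S <= size S)%N.
Proof.
have [[xs [<- [xsS indxs]]] _] := rank_modP N S.
by apply: indep_mod_size_le indxs _ => x /xsS /in_sat_span.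
Qed.

Lemma sum_cat_ord ys xs (c : nat -> int) :
  \sum_(i < size (ys ++ xs)) (ys ++ xs)`_i *~ c i =
  \sum_(i < size ys) ys`_i *~ c i + \sum_(i < size xs) xs`_i *~ c (i + size ys)%N.
Proof.
rewrite -(big_mkord xpredT (fun i => (ys ++ xs)`_i *~ c i)).
rewrite -(big_mkord xpredT (fun i => ys`_i *~ c i)).
rewrite -(big_mkord xpredT (fun i => xs`_i *~ c (i + size ys)%N)).
rewrite size_cat (big_cat_nat _ (leq_addr _ _)) //=.
congr (_ + _); first by rewrite !big_nat; apply: eq_bigr => i /andP[_ lt]; rewrite nth_cat lt.
rewrite -{1}(add0n (size ys)) big_addn addKn !big_nat.
by apply: eq_bigr => i _; rewrite nth_cat ltnNge leq_addl /= addnK.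
Qed.

Lemma indep_mod_cat N xs ys : indep_mod [::] ys -> (forall y, y \in ys -> inspan N y) ->
  indep_mod N xs -> indep_mod [::] (ys ++ xs).
Proof.
move=> /indep_mod_natP indys ysN /indep_mod_natP indxs.
apply/indep_mod_natP => c; rewrite sum_cat_ord => /inspan_nil /eqP.
rewrite addrC addr_eq0 => /eqP hc.
have cx i : (i < size xs)%N -> c (i + size ys)%N = 0.
  apply: (indxs (fun k => c (k + size ys)%N)); rewrite hc; apply/inspanN/inspan_sum => j.
  exact/inspanMz/ysN/mem_nth.
have cy i : (i < size ys)%N -> c i = 0.
  apply: (indys c); move/esym/eqP: hc.
  rewrite [X in _ == X]big1 => [|j _]; last by rewrite cx ?mulr0z.
  by rewrite oppr_eq0 => /eqP ->; apply: inspan0.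
move=> i; rewrite size_cat => lt; have [iys | ysi] := ltnP i (size ys); first exact: cy.
by rewrite -(subnK ysi); apply: cx; rewrite ltn_subLR.
Qed.

Lemma rank_mod_cat N S : (rank_mod N S + rank_mod [::] N)%N = rank_mod [::] (N ++ S).
Proof.
have [[xs [sxs [xsS indxs]]] _] := rank_modP N S.
have [[ys [sys [ysN indys]]] _] := rank_modP [::] N.
rewrite -sxs -sys addnC -size_cat; apply/eqP; rewrite eqn_leq; apply/andP; split.
  apply: (rank_modP [::] (N ++ S)).2 (indep_mod_cat indys ysN indxs).
  move=> v; rewrite mem_cat => /orP[/ysN | /xsS] //.
  by apply: inspan_subset => w /=; rewrite mem_cat => ->.
have [[zs [<- [zsNS indzs]]] _] := rank_modP [::] (N ++ S).
apply: indep_mod_size_le indzs _ => z /zsNS /(rank_mod_basis_sat sxs xsS indxs).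
apply: in_sat_trans => w; rewrite mem_cat => /orP[wN | wxs].
  apply: in_sat_subset (rank_mod_basis_sat sys ysN indys (inspan_mem wN)).
  by apply: inspan_subset => u /=; rewrite mem_cat => ->.
by apply/in_sat_span/inspan_mem; rewrite /= mem_cat wxs orbT.
Qed.

End Rank.

Section HomCount.
Variable V : zmodType.
Implicit Types (N S K : seq V) (v x : V).

Lemma tor_hom0 (G : zmodType) K (phi : V -> G) : is_tor_hom K phi -> phi 0 = 0.
Proof. by move=> [_ phiK]; apply/phiK/inspan0. Qed.

Lemma tor_homMn (G : zmodType) K (phi : V -> G) x n :
  is_tor_hom K phi -> in_sat K x -> phi (x *+ n) = phi x *+ n.
Proof.
move=> hphi xsat; elim: n => [|n IH]; first by rewrite !mulr0n (tor_hom0 hphi).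
by rewrite !mulrS hphi.1 ?IH //; apply: in_satMn.
Qed.

Lemma tor_hom_eq (G : zmodType) K (phi : V -> G) x x' :
  is_tor_hom K phi -> in_sat K x' -> inspan K (x - x') -> phi x = phi x'.
Proof.
move=> [phiD phiK] x'sat dxK.
by rewrite -(subrK x' x) phiD ?(phiK _ dxK) ?add0r //; apply: in_sat_span.
Qed.

Lemma mult_mod_eq_span (G : zmodType) N S N' S' :
  (forall v, inspan (N ++ S) v <-> inspan (N' ++ S') v) -> mult_mod G N S = mult_mod G N' S'.
Proof. by move=> /inspan_ext eNS; rewrite /mult_mod /is_hom_count /is_tor_hom /in_sat eNS. Qed.

Lemma hom_count_le (G : zmodType) K n m :
  is_hom_count G K n -> is_hom_count G K m -> (n <= m)%N.
Proof.
move=> [hs [_ [hsP [hsD _]]]] [gs [_ [_ [_ gsS]]]].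
have match_hom (i : 'I_n) : exists j : 'I_m, forall x, in_sat K x ->
    nth (fun=> 0) hs i x = nth (fun=> 0) gs j x.
  by have [j jm eij] := gsS _ (hsP i (ltn_ord i)); exists (Ordinal jm).
have /choice [f fP] := match_hom.
have finj : injective f.
  move=> i i' efi; apply/val_inj/hsD; rewrite ?ltn_ord // => x xsat.
  by rewrite fP // efi -fP.
by have := leq_card f finj; rewrite !card_ord.
Qed.

Lemma mult_modE (G : zmodType) N S n : is_hom_count G (N ++ S) n -> mult_mod G N S = n.
Proof.
move=> hn; have hmult : is_hom_count G (N ++ S) (mult_mod G N S).
  by rewrite /mult_mod; apply: epsilon_spec; exists n.
by apply/eqP; rewrite eqn_leq !(hom_count_le hn hmult, hom_count_le hmult hn).
Qed.

(* Hom(T, G1 x G2) = Hom(T, G1) x Hom(T, G2), enumerated by i = i1 * n2 + i2. *)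
Lemma hom_count_mul (G1 G2 : zmodType) K n1 n2 :
  is_hom_count G1 K n1 -> is_hom_count G2 K n2 -> is_hom_count (G1 * G2)%type K (n1 * n2).
Proof.
move=> [hs [_ [hsP [hsD hsS]]]] [gs [_ [gsP [gsD gsS]]]].
pose F i v : G1 * G2 := (nth (fun=> 0) hs (i %/ n2)%N v, nth (fun=> 0) gs (i %% n2)%N v).
have ltF i : (i < n1 * n2)%N -> (i %/ n2 < n1)%N /\ (i %% n2 < n2)%N.
  move=> lt; have n2p : (0 < n2)%N by rewrite lt0n; apply: contraTneq lt => ->; rewrite muln0.
  by rewrite ltn_divLR // ltn_pmod.
exists (mkseq F (n1 * n2)); split; first by rewrite size_mkseq.
split.
  move=> i lt; rewrite nth_mkseq //; have [lt1 lt2] := ltF i lt.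
  have [hD hK] := hsP _ lt1; have [gD gK] := gsP _ lt2.
  split=> [x y xsat ysat | x xK]; first by rewrite /F hD ?gD.
  by rewrite /F hK ?gK.
split.
  move=> i j lti ltj; rewrite !nth_mkseq // => eF.
  have [lti1 lti2] := ltF i lti; have [ltj1 ltj2] := ltF j ltj.
  have e1 := hsD _ _ lti1 ltj1 (fun x xsat => congr1 fst (eF x xsat)).
  have e2 := gsD _ _ lti2 ltj2 (fun x xsat => congr1 snd (eF x xsat)).
  by rewrite (divn_eq i n2) (divn_eq j n2) e1 e2.
move=> phi [phiD phiK].
have [i1 lt1 e1] := hsS (fun v => (phi v).1)
  (conj (fun x y xs ys => congr1 fst (phiD x y xs ys)) (fun x xK => congr1 fst (phiK x xK))).
have [i2 lt2 e2] := gsS (fun v => (phi v).2)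
  (conj (fun x y xs ys => congr1 snd (phiD x y xs ys)) (fun x xK => congr1 snd (phiK x xK))).
have n2p : (0 < n2)%N by apply: leq_ltn_trans lt2.
have lt : (i1 * n2 + i2 < n1 * n2)%N.
  by apply: leq_trans (_ : i1 * n2 + n2 <= _)%N; rewrite ?ltn_add2l // -mulSnr leq_mul2r lt1 orbT.
exists (i1 * n2 + i2)%N => // x xsat; rewrite nth_mkseq // /F.
rewrite divnMDl // divn_small // addn0 modnMDl modn_small // -e1 // -e2 //.
by case: (phi x).
Qed.

End HomCount.

Lemma enum_classes (X : Type) (d : X) (P : X -> Prop) (E : X -> X -> Prop) (F : finType)
  (code : X -> F) :
  (forall a b, P a -> P b -> (E a b <-> code a = code b)) ->
  exists n (hs : seq X), [/\ size hs = n, forall i, (i < n)%N -> P (nth d hs i),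
    forall i j, (i < n)%N -> (j < n)%N -> E (nth d hs i) (nth d hs j) -> i = j &
    forall a, P a -> exists2 i, (i < n)%N & E a (nth d hs i)].
Proof.
move=> Ecode.
pose C := [set f | `[< exists a, P a /\ code a = f >]].
pose pick f := epsilon (inhabits d) (fun a => P a /\ code a = f).
have pickP f : f \in C -> P (pick f) /\ code (pick f) = f.
  by rewrite inE => /asboolP; apply: epsilon_spec.
pose s := enum C.
have sC i : (i < size s)%N -> nth (code d) s i \in C by move=> lt; rewrite -mem_enum mem_nth.
exists (size s), (map pick s); split; first by rewrite size_map.
- by move=> i lt; rewrite (nth_map (code d)) //; apply: (pickP _ (sC i lt)).1.
- move=> i j lti ltj; rewrite !(nth_map (code d)) //.
  have [Pi ci] := pickP _ (sC i lti); have [Pj cj] := pickP _ (sC j ltj).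
  move/(Ecode _ _ Pi Pj); rewrite ci cj => eij.
  by apply/eqP; rewrite -(nth_uniq (code d) lti ltj (enum_uniq _)) eij.
move=> a Pa; have aC : code a \in C by rewrite inE; apply/asboolP; exists a.
exists (index (code a) s); first by rewrite index_mem mem_enum.
rewrite (nth_map (code d)) ?index_mem ?mem_enum // nth_index ?mem_enum //.
by have [Ppick cpick] := pickP _ aC; apply/(Ecode _ _ Pa Ppick); rewrite cpick.
Qed.

Lemma absz_modz_lt (c : int) M : (absz (c %% M.+1)%Z < M.+1)%N.
Proof. by rewrite -ltz_nat gez0_abs ?modz_ge0 ?ltz_pmod. Qed.

Section FinGen.
Variables (V : zmodType) (hV : fin_gen V).
Implicit Types (N S K : seq V) (x : V).

Lemma in_sat_exponent K : exists2 M, (0 < M)%N & forall x, in_sat K x -> inspan K (x *+ M).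
Proof.
have [gens gensP] := hV.
have [[xs [sxs [xsK indxs]]] _] := rank_modP K gens.
have gens_sat w : w \in gens -> in_sat (K ++ xs) w.
  move=> _; apply: rank_mod_basis_sat sxs xsK indxs _ _.
  by apply: inspan_subset (gensP w) => u uG; rewrite mem_cat uG orbT.
have [M M0 HM] := in_sat_uniform_exponent gens_sat.
exists M => // x [k [k0 hk]].
have /inspan_catP [n [_ [hn [c ->] hxe]]] := HM x (gensP x).
have hck : inspan K (\sum_(j < size xs) xs`_j *~ (c j * k%:Z)).
  under eq_bigr => j _ do rewrite mulrzA -pmulrn.
  rewrite sumrMnl; have -> : \sum_(j < size xs) xs`_j *~ c j = x *+ M - n.
    by rewrite hxe addrC addKr.
  by rewrite mulrnBl -mulrnA mulnC mulrnA; apply: inspanB; apply: inspanMn.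
have c0 i : c i = 0.
  by have /eqP := indxs _ hck i; rewrite mulf_eq0 eqz_nat eqn0Ngt k0 orbF => /eqP.
by rewrite hxe big1 ?addr0 // => i _; rewrite c0 mulr0z.
Qed.

(* Writing x = sum_i c_i g_i over generators, the residues of the c_i modulo the
   exponent M determine the class of x in Ksat/K. *)
Lemma sat_finite_reps K : exists (T : finType) (rep : T -> V),
  (forall r, in_sat K (rep r)) /\ (forall x, in_sat K x -> exists r, inspan K (x - rep r)).
Proof.
have [M M0 HM] := in_sat_exponent K.
have [gens gensP] := hV.
case: M M0 HM => [//|M] M0 HM.
pose T := {ffun 'I_(size gens) -> 'I_M.+1}.
pose res (c : 'I_(size gens) -> int) : T := [ffun i => inord (absz (c i %% M.+1)%Z)].
pose Q r x := in_sat K x /\ exists c, x = \sum_(i < size gens) gens`_i *~ c i /\ res c = r.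
have Qdiff r x x' : Q r x -> Q r x' -> inspan K (x - x').
  move=> [xsat [c [xc rc]]] [x'sat [c' [x'c' rc']]].
  have dvd i : (M.+1%:Z %| c i - c' i)%Z.
    rewrite -eqz_mod_dvd; have /(congr1 val) := congr1 (fun f : T => f i) (etrans rc (esym rc')).
    rewrite /= !ffunE /= !inordK ?absz_modz_lt // => eabs.
    apply/eqP; rewrite -[LHS]gez0_abs ?modz_ge0 // -[RHS]gez0_abs ?modz_ge0 //.
    by rewrite eabs.
  pose y := \sum_(i < size gens) gens`_i *~ ((c i - c' i) %/ M.+1)%Z.
  have exy : x - x' = y *+ M.+1.
    rewrite xc x'c' -sumrB pmulrn mulrz_suml; apply: eq_bigr => i _.
    by rewrite -mulrzA divzK // mulrzBr.
  rewrite exy; apply/HM/(in_sat_of_mulrn M0); rewrite -exy.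
  by apply: in_satB.
pose Prep r x := in_sat K x /\ ((exists x', Q r x') -> Q r x).
pose rep r := epsilon (inhabits 0) (Prep r).
have repP r : Prep r (rep r).
  apply: epsilon_spec; have [[x Qx] | noQ] := EM (exists x, Q r x).
    by exists x; split=> //; case: Qx.
  by exists 0; split=> [|/noQ//]; apply: in_sat0.
exists T, rep; split=> [r | x xsat]; first exact: (repP r).1.
have [c xc] := gensP x.
have Qx : Q (res c) x by split=> //; exists c.
by exists (res c); apply: Qdiff Qx ((repP _).2 (ex_intro _ x Qx)).
Qed.

Lemma hom_count_exists (G : zmodType) K : torsionwise_finite G -> exists n, is_hom_count G K n.
Proof.
move=> hG; have [M M0 HM] := in_sat_exponent K.
have [T [rep [rep_sat repP]]] := sat_finite_reps K.
have [s sP] := hG M M0.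
have rep_mem (phi : V -> G) r : is_tor_hom K phi -> phi (rep r) \in s.
  move=> hphi; apply: sP; rewrite -(tor_homMn _ hphi (rep_sat r)).
  exact/hphi.2/HM/rep_sat.
pose code (phi : V -> G) := [ffun r : T => inord (index (phi (rep r)) s) : 'I_(size s).+1].
suff Ecode a b : is_tor_hom K a -> is_tor_hom K b ->
    ((forall x, in_sat K x -> a x = b x) <-> code a = code b).
  have [n [hs [? ? ? ?]]] := enum_classes (fun=> 0) (P := is_tor_hom K)
    (E := fun a b => forall x, in_sat K x -> a x = b x) Ecode.
  by exists n, hs.
move=> ha hb; split=> [eab | /ffunP ecode x xsat].
  by apply/ffunP => r; rewrite !ffunE eab.
have [r xr] := repP x xsat.
rewrite (tor_hom_eq ha (rep_sat r) xr) (tor_hom_eq hb (rep_sat r) xr).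
have /(congr1 val) := ecode r; rewrite !ffunE /= !inordK ?ltnS ?index_size // => eidx.
by rewrite -(nth_index 0 (rep_mem a r ha)) eidx nth_index // rep_mem.
Qed.

Lemma mult_mod_mul (G1 G2 : zmodType) N S :
  torsionwise_finite G1 -> torsionwise_finite G2 ->
  mult_mod (G1 * G2)%type N S = (mult_mod G1 N S * mult_mod G2 N S)%N.
Proof.
move=> h1 h2; have [n1 hn1] := hom_count_exists (N ++ S) h1.
have [n2 hn2] := hom_count_exists (N ++ S) h2.
by rewrite (mult_modE hn1) (mult_modE hn2); apply/mult_modE/hom_count_mul.
Qed.

End FinGen.

Lemma signrB (R : pzRingType) m n : (n <= m)%N -> (-1) ^+ (m - n) = (-1) ^+ m * (-1) ^+ n :> R.
Proof. by move=> le_nm; rewrite -signr_odd oddB // signr_addb !signr_odd. Qed.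

Lemma signr_sqr (R : pzRingType) n : (-1) ^+ n * (-1) ^+ n = 1 :> R.
Proof. by rewrite -expr2 sqrr_sign. Qed.

Section Sublist.
Variables (V : zmodType) (A : seq V).
Implicit Types (B C D : {set 'I_(size A)}).

Lemma mem_subl B x : x \in subl A 0 B <-> exists2 i, i \in B & x = A`_i.
Proof.
rewrite /subl; split=> [/mapP [i] | [i iB ->]]; first by rewrite mem_enum; exists i.
by apply: map_f; rewrite mem_enum.
Qed.

Lemma size_subl B : size (subl A 0 B) = #|B|.
Proof. by rewrite size_map -cardE. Qed.

Lemma subl_subset C B : C \subset B -> {subset subl A 0 C <= subl A 0 B}.
Proof. by move=> sCB x /mem_subl [i /(subsetP sCB) iB ->]; apply/mem_subl; exists i. Qed.

Lemma mem_subl_setU B D : subl A 0 B ++ subl A 0 D =i subl A 0 (B :|: D).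
Proof.
move=> x; rewrite mem_cat; apply/orP/idP.
  by case=> /mem_subl [i iBD ->]; apply/mem_subl; exists i; rewrite // inE iBD ?orbT.
case/mem_subl=> i; rewrite inE => /orP[iB | iD] ->; [left | right].
  by apply/mem_subl; exists i.
by apply/mem_subl; exists i.
Qed.

Lemma mem_subl_setC B : subl A 0 B ++ subl A 0 (~: B) =i A.
Proof.
move=> x; rewrite mem_subl_setU setUCr; apply/idP/idP.
  by case/mem_subl=> i _ ->; apply: mem_nth.
by move=> /(nthP 0) [i ltiA <-]; apply/mem_subl; exists (Ordinal ltiA); rewrite ?inE.
Qed.

End Sublist.

(* Sublists of [subl A 0 B] are the [subl A 0 C] with [C \subset B], through
   the increasing enumeration of [B]. *)
Lemma big_subsets_subl (R : nmodType) (V : zmodType) (A : seq V) (B : {set 'I_(size A)})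
    (F : seq V -> nat -> R) :
  (forall s s' k, s =i s' -> F s k = F s' k) ->
  \sum_(C : {set 'I_(size (subl A 0 B))}) F (subl (subl A 0 B) 0 C) #|C| =
  \sum_(C : {set 'I_(size A)} | C \subset B) F (subl A 0 C) #|C|.
Proof.
move=> F_eq_mem; pose emb j := enum_val (cast_ord (size_subl B) j).
have emb_inj : injective emb by move=> j j' /enum_val_inj /cast_ord_inj.
have nth_emb (j : 'I_(size (subl A 0 B))) : (subl A 0 B)`_j = A`_(emb j).
  rewrite /subl (nth_map (emb j)); last by rewrite -cardE -size_subl.
  by rewrite /emb [in RHS](enum_val_nth (enum_val (cast_ord (size_subl B) j))).
rewrite [RHS](eq_bigl (mem [set emb @: C | C : {set 'I_(size (subl A 0 B))}])); last first.
  move=> C; apply/idP/imsetP => [sCB | [C' _ ->]]; last first.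
    by apply/subsetP => _ /imsetP [j _ ->]; apply: enum_valP.
  exists (emb @^-1: C) => //; apply/setP => i; apply/idP/imsetP => [iC | [j]].
    have iB := subsetP sCB i iC.
    exists (cast_ord (esym (size_subl B)) (enum_rank_in iB i));
      by rewrite ?inE /emb cast_ordKV enum_rankK_in.
  by rewrite inE => jC ->.
rewrite big_imset /=; last by move=> C1 C2 _ _; apply: imset_inj.
apply: eq_bigr => C _; rewrite card_imset //; apply: F_eq_mem => x.
apply/idP/idP => [/(mem_subl (A := subl A 0 B)) [j jC ->] | /mem_subl [_ /imsetP [j jC ->] ->]].
  by apply/mem_subl; exists (emb j); [apply: imset_f | rewrite nth_emb].
by apply/(mem_subl (A := subl A 0 B)); exists j; rewrite ?nth_emb.
Qed.

Definition tutte_term (R : comNzRingType) (V G : zmodType) (N L : seq V) (x y : R)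
    (s : seq V) (k : nat) : R :=
  (mult_mod G N s)%:R * (x - 1) ^+ (rank_mod N L - rank_mod N s) * (y - 1) ^+ (k - rank_mod N s).

Lemma tutte_term_eq_mem (R : comNzRingType) (V G : zmodType) (N L : seq V) (x y : R) s s' k :
  s =i s' -> tutte_term G N L x y s k = tutte_term G N L x y s' k.
Proof.
move=> ess'; have eNs : forall v, inspan (N ++ s) v <-> inspan (N ++ s') v.
  by apply: inspan_eq_mem => v; rewrite !mem_cat ess'.
by rewrite /tutte_term (mult_mod_eq_span G eNs) (@rank_mod_eq_span _ N s N s').
Qed.

Lemma arith_tutte_subl (R : comNzRingType) (V G : zmodType) (N A : seq V)
    (B : {set 'I_(size A)}) (x y : R) :
  arith_tutte R G N (subl A 0 B) x y =
  \sum_(C : {set 'I_(size A)} | C \subset B) tutte_term G N (subl A 0 B) x y (subl A 0 C) #|C|.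
Proof. exact/big_subsets_subl/tutte_term_eq_mem. Qed.

Section Mobius.
Variables (R : comNzRingType) (T : finType).
Implicit Types (B C D S : {set T}).

(* Expand \prod_i (a i + b i) by [bigA_distr]: the term of [B] is the signed
   indicator of [C \subset B \subset S], while a i + b i = [(i \in C) = (i \in S)]. *)
Lemma sum_sign_interval C S :
  \sum_(B : {set T} | (C \subset B) && (B \subset S)) (-1) ^+ #|S :\: B| = (C == S)%:R :> R.
Proof.
pose a i : R := (i \in S)%:R.
pose b i : R := if i \in C then 0 else if i \in S then -1 else 1.
have prod0 (F : T -> R) i : F i = 0 -> \prod_j F j = 0.
  by move=> Fi0; rewrite (bigD1 i) //= Fi0 mul0r.
transitivity (\prod_i (a i + b i)); last first.
  case: eqVneq => [eCS | ].
    by apply: big1 => i _; rewrite /a /b -eCS; case: (i \in C); rewrite ?addr0 ?add0r.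
  rewrite eqEsubset negb_and => /orP[/subsetPn [i iC iS] | /subsetPn [i iS iC]].
    by apply: (prod0 _ i); rewrite /a /b iC (negbTE iS) add0r.
  by apply: (prod0 _ i); rewrite /a /b iS (negbTE iC) addrN.
rewrite bigA_distr [LHS]big_mkcond; apply: eq_big => [// | B _]; symmetry.
have [/andP [sCB sBS] | ] := boolP ((C \subset B) && (B \subset S)).
  rewrite -prodr_const [RHS]big_mkcond; apply: eq_bigr => i _.
  rewrite /a /b !inE; have [iB | iB] := boolP (i \in B); first by rewrite (subsetP sBS).
  by rewrite (contraNF (subsetP sCB i) iB); case: (i \in S).
rewrite negb_and => /orP[/subsetPn [i iC iB] | /subsetPn [i iB iS]].
  by apply: (prod0 _ i); rewrite (negbTE iB) /b iC.
by apply: (prod0 _ i); rewrite iB /a (negbTE iS).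
Qed.

Lemma sum_mobius_subsets (f g : {set T} -> R) :
  \sum_(B : {set T}) \sum_(C : {set T} | C \subset B) \sum_(S : {set T} | B \subset S)
    f C * g S * (-1) ^+ #|S :\: B| =
  \sum_(S : {set T}) f S * g S.
Proof.
transitivity (\sum_(B : {set T}) \sum_(C : {set T}) \sum_(S : {set T})
    (if (C \subset B) && (B \subset S) then f C * g S * (-1) ^+ #|S :\: B| else 0)).
  apply: eq_bigr => B _; rewrite big_mkcond; apply: eq_bigr => C _.
  case: (C \subset B); last by rewrite big1.
  by rewrite big_mkcond; apply: eq_bigr => S _; case: (B \subset S).
rewrite exchange_big; apply: eq_bigr => C _; rewrite exchange_big.
transitivity (\sum_(S : {set T}) f C * g S * (C == S)%:R).
  apply: eq_bigr => S _; rewrite -sum_sign_interval mulr_sumr [RHS]big_mkcond.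
  by apply: eq_bigr => B _; case: ifP; rewrite ?mulr0.
rewrite (bigD1 C) //= eqxx mulr1 big1 ?addr0 // => S /negbTE.
by rewrite eq_sym => ->; rewrite mulr0.
Qed.

Lemma big_subsetC_setU (h : {set T} -> {set T} -> R) B :
  \sum_(D : {set T} | D \subset ~: B) h (B :|: D) D =
  \sum_(S : {set T} | B \subset S) h S (S :\: B).
Proof.
rewrite (reindex_onto (fun S => S :\: B) (setU B)) => [|D sDB]; last first.
  by apply/setP => i; rewrite !inE; case: (boolP (i \in B)) => //= iB;
    apply/esym/negbTE/negP => /(subsetP sDB); rewrite inE iB.
have UD S : B :|: (S :\: B) = B :|: S by apply/setP => i; rewrite !inE; case: (i \in B).
apply: eq_big => [S | S /andP [_ /eqP ->] //].
rewrite UD; apply/idP/idP => [/andP [_ /eqP <-] | sBS]; first exact: subsetUl.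
rewrite (setUidPr sBS) eqxx andbT; apply/subsetP => i; rewrite !inE.
by case/andP.
Qed.

End Mobius.

Section Expansion.
Variables (Gamma : zmodType) (A : seq Gamma) (R : comNzRingType).
Implicit Types (B C D S : {set 'I_(size A)}).

Local Notation rk I := (rank_mod [::] (subl A 0 I)).

(* The sign (-1)^r(I) is what turns both sides into the same Mobius sum over
   the intervals [C, S] of the Boolean lattice. *)
Definition tutte_weight (G : zmodType) I (t : R) (e : nat) : R :=
  (mult_mod G [::] (subl A 0 I))%:R * (t - 1) ^+ e * (-1) ^+ rk I.

Lemma arith_tutte_prod (G1 G2 : zmodType) (x y : R) : fin_gen Gamma ->
  torsionwise_finite G1 -> torsionwise_finite G2 ->
  arith_tutte R (G1 * G2)%type [::] A x y =
  \sum_(S : {set 'I_(size A)})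
    tutte_weight G1 S y (#|S| - rk S) * tutte_weight G2 S x (rank_mod [::] A - rk S).
Proof.
move=> hGamma h1 h2; apply: eq_bigr => S _.
rewrite mult_mod_mul // natrM /tutte_weight.
(* Generalize the atoms first: [ring] is very slow on the raw cardinal and rank terms. *)
move: (mult_mod G1 [::] (subl A 0 S))%:R (mult_mod G2 [::] (subl A 0 S))%:R.
move: (#|S| - rk S)%N (rank_mod [::] A - rk S)%N (rk S).
by move=> e1 e2 r a b; have s2 := signr_sqr R r; ring: s2.
Qed.

Lemma arith_tutte_deletion (G : zmodType) B (y : R) :
  arith_tutte R G [::] (subl A 0 B) 0 y =
  (-1) ^+ rk B * \sum_(C : {set 'I_(size A)} | C \subset B) tutte_weight G C y (#|C| - rk C).
Proof.
rewrite arith_tutte_subl mulr_sumr; apply: eq_bigr => C sCB.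
have le_rC_rB : (rk C <= rk B)%N.
  by apply/rank_mod_mono/inspan_subset/subl_subset.
rewrite /tutte_term /tutte_weight sub0r signrB //.
move: (mult_mod G [::] (subl A 0 C))%:R (#|C| - rk C)%N (rk B) (rk C).
by move=> a e r r'; ring.
Qed.

Lemma arith_tutte_contraction (G : zmodType) B (x : R) :
  arith_tutte R G (subl A 0 B) (subl A 0 (~: B)) x 0 =
  (-1) ^+ rk B * \sum_(S : {set 'I_(size A)} | B \subset S)
    tutte_weight G S x (rank_mod [::] A - rk S) * (-1) ^+ #|S :\: B|.
Proof.
rewrite arith_tutte_subl -(big_subsetC_setU (fun S D =>
  tutte_weight G S x (rank_mod [::] A - rk S) * (-1) ^+ #|D|)) mulr_sumr.
apply: eq_bigr => D _; rewrite /tutte_term.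
set rD := rank_mod (subl A 0 B) (subl A 0 D).
set rC := rank_mod (subl A 0 B) (subl A 0 (~: B)).
have mult_BD : mult_mod G (subl A 0 B) (subl A 0 D) = mult_mod G [::] (subl A 0 (B :|: D)).
  exact/mult_mod_eq_span/inspan_eq_mem/mem_subl_setU.
have rank_BD : (rD + rk B)%N = rk (B :|: D).
  by rewrite rank_mod_cat; apply: rank_mod_eq_span => // v; apply/inspan_eq_mem/mem_subl_setU.
have rank_A : (rC + rk B)%N = rank_mod [::] A.
  by rewrite rank_mod_cat; apply: rank_mod_eq_span => // v; apply/inspan_eq_mem/mem_subl_setC.
have le_rD : (rD <= #|D|)%N by rewrite -(size_subl D) rank_mod_le_size.
have -> : (rC - rD = rank_mod [::] A - rk (B :|: D))%N by rewrite -rank_A -rank_BD subnDr.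
have sign_rD : (-1) ^+ rD = (-1) ^+ rk (B :|: D) * (-1) ^+ rk B :> R.
  by rewrite -rank_BD exprD -mulrA signr_sqr mulr1.
rewrite mult_BD sub0r signrB // sign_rD /tutte_weight.
move: (mult_mod G [::] (subl A 0 (B :|: D)))%:R (rank_mod [::] A - rk (B :|: D))%N.
move: #|D| (rk B) (rk (B :|: D)).
by move=> d r r' a e; have s2 := signr_sqr R r; ring: s2.
Qed.

End Expansion.

Theorem mainTheorem19 (Gamma : zmodType) (hGamma : fin_gen Gamma) (A : seq Gamma)
  (G1 G2 : zmodType) (h1 : torsionwise_finite G1) (h2 : torsionwise_finite G2)
  (R : comNzRingType) (x y : R) :
  arith_tutte R (G1 * G2)%type [::] A x y =
  \sum_(B : {set 'I_(size A)})
     arith_tutte R G1 [::] (subl A 0 B) 0 y *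
     arith_tutte R G2 (subl A 0 B) (subl A 0 (~: B)) x 0.
Proof.
rewrite arith_tutte_prod // -sum_mobius_subsets; apply: eq_bigr => B _.
rewrite arith_tutte_deletion arith_tutte_contraction mulrACA signr_sqr mul1r.
rewrite big_distrl; apply: eq_bigr => C _.
by rewrite big_distrr; apply: eq_bigr => S _; rewrite -mulrA.
Qed.
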